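(* Let $d\ge2$, $T>1$, $\eta,\beta>0$, and let $\mathbf r_1,\mathbf r_2,\dots\in[0,1]^d\setminus\{\mathbf 0\}$ be any sequence of returns. Then for all $t\ge1$, the regularizer $\Phi_t$ of DONS (as in the context) is a self-concordant function on the interior of $\mathcal C_{d-1}$ with constant $M_{\Phi_t}\le\sqrt{\eta e}$.
   Context: Notation. $\mathcal C_{d-1}=\{\mathbf u\in\mathbb R^{d-1}: u_i\ge0,\ \sum_iu_i\le1\}$; for $\mathbf v\in\mathbb R^{d-1}$, $\bar{\mathbf v}=(v_1,\dots,v_{d-1},1-\sum_{i=1}^{d-1}v_i)\in\mathbb R^d$, i.e. $\bar{\mathbf v}=\mathbf e_d+J^\top\mathbf v$ with $J=[I_{d-1}\ \ -\mathbf 1]$; $\mathbf 1$ is all-ones; $\|\mathbf x\|_A=\sqrt{\mathbf x^\top A\mathbf x}$. Self-concordance: for a convex compact $\mathcal K$ with nonempty interior, a convex $f:\operatorname{int}\mathcal K\to\mathbb R$ is self-concordant with constant $M\ge0$ if $f$ is $C^3$, $f(\mathbf x_k)\to+\infty$ as $\mathbf x_k\to\mathbf x\in\partial\mathcal K$, and $|\nabla^3f(\mathbf x)[\mathbf u,\mathbf u,\mathbf u]|\le2M\|\mathbf u\|^3_{\nabla^2f(\mathbf x)}$ for all $\mathbf x\in\operatorname{int}\mathcal K$, $\mathbf u$. DONS (parameters $\eta,\beta>0$, horizon $T$). Set $\mathbf w_1=\mathbf 1/d\in\mathbb R^{d-1}$, $\boldsymbol\rho_0=d\mathbf 1\in\mathbb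 R^d$. For $t\ge0$ let $\eta_{t,i}=\eta\exp(\log_T(\rho_{t,i}/d))$, $\Psi_t(\mathbf x)=-\sum_{i=1}^d\ln(\bar x_i)/\eta_{t,i}$, $\Phi_t(\mathbf x)=\Psi_t(\mathbf x)+\frac{\beta d}{8}\|\mathbf x\|^2+\frac\beta8\sum_{s=1}^t\langle\mathbf g_s,\mathbf x-\mathbf w_s\rangle^2$. At round $t=1,2,\dots$: play $\mathbf u_t=(1-\frac1T)\mathbf w_t+\frac1{dT}\mathbf 1$; observe $\mathbf r_t$, set $\mathbf g_t=J\mathbf r_t/\langle\mathbf r_t,\bar{\mathbf u}_t\rangle$; for $i\in\{1,\dots,d\}$, $\rho_{t,i}=1/\bar u_{t,i}$ if $2\rho_{t-1,i}<1/\bar u_{t,i}$, else $\rho_{t,i}=\rho_{t-1,i}$; set $\boldsymbol\nabla_t=\nabla\Phi_t(\mathbf w_t)+\sum_{s=1}^t(\mathbf g_s-\nabla\Psi_s(\mathbf w_s)+\nabla\Psi_{s-1}(\mathbf w_s))$ and $\mathbf w_{t+1}=\mathbf w_t-\frac{(\nabla^2\Phi_t(\mathbf w_t))^{-1}\boldsymbol\nabla_t}{1+4\sqrt{e\eta}\|\boldsymbol\nabla_t\|_{(\nabla^2\Phi_t(\mathbf w_t))^{-1}}}$. *)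

From HB Require Import structures.
From mathcomp Require Import all_boot all_order all_algebra.
From mathcomp Require Import all_classical all_reals all_analysis.
Set Implicit Arguments. Unset Strict Implicit. Unset Printing Implicit Defensive.
Import Order.TTheory GRing.Theory Num.Theory.
Import numFieldNormedType.Exports.
Local Open Scope classical_set_scope.
Local Open Scope ring_scope.

Section SelfConcordance.
Variables (R : realType) (n : nat).

Definition evec (i : 'I_n) : 'rV[R]_n := delta_mx 0 i.

Definition partial (i : 'I_n) (f : 'rV[R]_n -> R) : 'rV[R]_n -> R :=
  fun x => derive f x (evec i).

Definition C3_on (U : set 'rV[R]_n) (f : 'rV[R]_n -> R) : Prop :=
  (forall x, U x -> {for x, continuous f}) /\
  (forall i x, U x -> derivable f x (evec i)) /\
  (forall i x, U x -> {for x, continuous (partial i f)}) /\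
  (forall i j x, U x -> derivable (partial i f) x (evec j)) /\
  (forall i j x, U x -> {for x, continuous (partial j (partial i f))}) /\
  (forall i j k x, U x -> derivable (partial j (partial i f)) x (evec k)) /\
  (forall i j k x, U x ->
     {for x, continuous (partial k (partial j (partial i f)))}).

Definition grad (f : 'rV[R]_n -> R) (x : 'rV[R]_n) : 'rV[R]_n :=
  \row_i partial i f x.
Definition hess (f : 'rV[R]_n -> R) (x : 'rV[R]_n) : 'M[R]_n :=
  \matrix_(i, j) partial j (partial i f) x.
Definition D3 (f : 'rV[R]_n -> R) (x u : 'rV[R]_n) : R :=
  \sum_i \sum_j \sum_k
    partial k (partial j (partial i f)) x * u 0 i * u 0 j * u 0 k.

Definition anorm (A : 'M[R]_n) (u : 'rV[R]_n) : R :=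
  Num.sqrt ((u *m A *m u^T) 0 0).

Definition convex_set (K : set 'rV[R]_n) : Prop :=
  forall x y (l : R), K x -> K y -> 0 <= l <= 1 -> K (l *: x + (1 - l) *: y).

Definition convex_on (U : set 'rV[R]_n) (f : 'rV[R]_n -> R) : Prop :=
  forall x y (l : R), U x -> U y -> 0 <= l <= 1 ->
    f (l *: x + (1 - l) *: y) <= l * f x + (1 - l) * f y.

Definition self_concordant (K : set 'rV[R]_n) (f : 'rV[R]_n -> R) (M : R)
  : Prop :=
  convex_set K /\ compact K /\ interior K !=set0 /\ 0 <= M /\
      convex_on (interior K) f /\ C3_on (interior K) f /\
      (forall (xs : nat -> 'rV[R]_n) (x : 'rV[R]_n),
          (forall k, interior K (xs k)) -> xs @ \oo --> x ->
          (closure K `\` interior K) x ->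
          (f \o xs) @ \oo --> +oo) /\
      (forall x u, interior K x ->
          `|D3 f x u| <= 2 * M * (anorm (hess f x) u) ^+ 3).

End SelfConcordance.

Section DONS.
Variables (R : realType) (d : nat).

Definition Cset : set 'rV[R]_d.-1 :=
  [set u | (forall i, 0 <= u 0 i) /\ \sum_i u 0 i <= 1].

Definition dotp m (a b : 'rV[R]_m) : R := \sum_i a 0 i * b 0 i.
Definition sqnorm m (a : 'rV[R]_m) : R := \sum_i a 0 i ^+ 2.

(** J = [I_{d-1}  -1] (a (d-1) x d matrix), e_d, and vbar = e_d + J^T v *)
Definition Jmx : 'M[R]_(d.-1, d) :=
  \matrix_(i, j) (if (j : nat) == i then 1
                  else if (j : nat) == d.-1 then -1 else 0).
Definition e_last : 'rV[R]_d := \row_j (if (j : nat) == d.-1 then 1 else 0).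
Definition vbar (v : 'rV[R]_d.-1) : 'rV[R]_d := e_last + v *m Jmx.

Variables (eta beta T : R) (r : nat -> 'rV[R]_d).

Definition eta_i (rho : 'rV[R]_d) (i : 'I_d) : R :=
  eta * expR (ln (rho 0 i / d%:R) / ln T).

Definition Psi (rho : 'rV[R]_d) (x : 'rV[R]_d.-1) : R :=
  - \sum_i ln (vbar x 0 i) / eta_i rho i.

Definition Phi (rho : 'rV[R]_d) (g w : nat -> 'rV[R]_d.-1) (t : nat)
  (x : 'rV[R]_d.-1) : R :=
  Psi rho x + beta * d%:R / 8 * sqnorm x
  + beta / 8 * \sum_(1 <= s < t.+1) (dotp (g s) (x - w s)) ^+ 2.

(** state after k rounds: (w, rho, g); w_s valid for 1 <= s <= k+1,
    rho_s for 0 <= s <= k, g_s for 1 <= s <= k *)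
Fixpoint dons (k : nat) :
  (nat -> 'rV[R]_d.-1) * (nat -> 'rV[R]_d) * (nat -> 'rV[R]_d.-1) :=
  match k with
  | 0 => (fun _ => const_mx (d%:R)^-1, fun _ => const_mx d%:R, fun _ => 0)
  | k'.+1 =>
    let '(w, rho, g) := dons k' in
    let t := k'.+1 in
    let u := (1 - T^-1) *: w t + (d%:R * T)^-1 *: const_mx 1 in
    let ub := vbar u in
    let gt := (dotp (r t) ub)^-1 *: (r t *m Jmx^T) in
    let rhot := \row_i (if 2 * rho k' 0 i < (ub 0 i)^-1 then (ub 0 i)^-1
                        else rho k' 0 i) in
    let rho' := fun s => if s == t then rhot else rho s in
    let g' := fun s => if s == t then gt else g s in
    let Phit := Phi (rho' t) g' w t in
    let nab := grad Phit (w t)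
       + \sum_(1 <= s < t.+1)
           (g' s - grad (Psi (rho' s)) (w s) + grad (Psi (rho' s.-1)) (w s)) in
    let Hinv := invmx (hess Phit (w t)) in
    let nrm := anorm Hinv nab in
    let wnext := w t - (1 + 4 * Num.sqrt (expR 1 * eta) * nrm)^-1 *: (nab *m Hinv) in
    let w' := fun s => if s == t.+1 then wnext else w s in
    (w', rho', g')
  end.

Definition dons_Phi (t : nat) : 'rV[R]_d.-1 -> R :=
  let '(w, rho, g) := dons t in Phi (rho t) g w t.

End DONS.

From Pilot Require Import Defs.
From HB Require Import structures.
From mathcomp Require Import all_boot all_order all_algebra.
From mathcomp Require Import all_classical all_reals all_analysis.
From mathcomp Require Import ring lra.
Set Implicit Arguments. Unset Strict Implicit. Unset Printing Implicit Defensive.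
Import Order.TTheory GRing.Theory Num.Theory.
Import numFieldNormedType.Exports.
Local Open Scope classical_set_scope.
Local Open Scope ring_scope.

(* Phi_t is a sum of the barrier terms -ln(xbar_i)/eta_{t,i} and of convex
   quadratics, each a one-variable function composed with an affine map.  Only
   the barrier terms have a third derivative: writing z_i = (J^T u)_i / xbar_i,
     D^3 Phi_t(x)[u,u,u] = - sum_i 2 z_i^3 / eta_{t,i},
     ||u||^2_{Hess Phi_t(x)} >= sum_i z_i^2 / eta_{t,i},
   so |z_i| <= sqrt(eta_{t,i}) ||u|| and |D^3 Phi_t[u,u,u]| is at most
   2 sqrt(max_i eta_{t,i}) ||u||^3.  It remains to see that eta_{t,i} <= e eta,
   i.e. rho_{t,i} <= dT, along every run of DONS.  The played point satisfies
   ubar_t = (1 - 1/T) wbar_t + 1/(dT), so this holds as long as every w_t lies in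
   the interior of C_{d-1}; and the damped Newton step keeps w_{t+1} there, because
   its Hessian norm is below 1/(4 sqrt(e eta)), inside the Dikin ellipsoid
   sqrt(max_i eta_{t,i}) ||v|| < 1 on which every |(J^T v)_i| < xbar_i. *)

Section AffineForm.
Variables (R : realType) (m : nat).
Local Notation V := 'rV[R]_m.

Definition aff (c : 'I_m -> R) (b : R) (y : V) : R := \sum_j c j * y 0 j + b.

Lemma aff_line c b h v y : aff c b (h *: v + y) = aff c b y + h * aff c 0 v.
Proof.
rewrite /aff addr0 mulr_sumr addrAC -big_split /=; congr (_ + _).
by apply: eq_bigr => j _; rewrite !mxE; ring.
Qed.

Lemma aff_conv c b (x y : V) l :
  aff c b (l *: x + (1 - l) *: y) = l * aff c b x + (1 - l) * aff c b y.
Proof.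
rewrite /aff !mulrDr addrACA -mulrDl subrKC mul1r !mulr_sumr -big_split /=.
by congr (_ + _); apply: eq_bigr => j _; rewrite !mxE; ring.
Qed.

Lemma aff_evec c j : aff c 0 (evec R j) = c j.
Proof.
rewrite /aff addr0 (bigD1 j) //= big1 ?addr0 => [|k /negbTE kj].
  by rewrite mxE !eqxx mulr1.
by rewrite mxE kj andbF mulr0.
Qed.

Lemma continuous_aff c b : continuous (aff c b).
Proof.
have lin : continuous (fun x : V => \sum_j c j * x 0 j).
  apply: continuous_big => [|j _ z]; first exact: add_continuous.
  exact: cvgM (cvg_cst _) (@coord_continuous R 1 m 0 j z).
by move=> y; apply: (cvgD (lin y) (cvg_cst b)).
Qed.

End AffineForm.

Section DirectionalDerivative.
Variables (R : realType) (m : nat).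
Local Notation V := 'rV[R]_m.

Let quotient_line (f : V -> R) y v :
  (fun h : R => h^-1 *: ((f \o shift y) (h *: v) - f y)) =
  (fun h : R => h^-1 *: (((fun t : R => f (t *: v + y)) \o shift 0) (h *: 1) -
     (fun t : R => f (t *: v + y)) 0)).
Proof.
by apply/funext => h /=; rewrite scale0r add0r addr0 /GRing.scale /= mulr1.
Qed.

Lemma derivable_line (f : V -> R) y v :
  derivable f y v <-> derivable (fun t : R => f (t *: v + y)) 0 1.
Proof. by rewrite /derivable quotient_line. Qed.

Lemma derive_line (f : V -> R) y v :
  derive f y v = derive (fun t : R => f (t *: v + y)) 0 1.
Proof. by rewrite /derive quotient_line. Qed.

Lemma is_derive_aff_comp (phi : R -> R) dphi c b (y v : V) :
  is_derive (aff c b y) 1 phi dphi ->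
  is_derive y v (fun x => phi (aff c b x)) (aff c 0 v * dphi).
Proof.
move=> [phi_derivable phi_derive].
pose k := fun h : R => aff c b y + h * aff c 0 v.
have k0 : k 0 = aff c b y by rewrite /k mul0r addr0.
have [k_derivable k_derive] : is_derive (0 : R) 1 k (aff c 0 v).
  have -> : k = cst (aff c b y) + (fun h => aff c 0 v *: h).
    by apply/funext => h; rewrite /k /= mulrC.
  by apply: is_derive_eq; rewrite add0r /GRing.scale /= mulr1.
have line_k : (fun t : R => phi (aff c b (t *: v + y))) = phi \o k.
  by apply/funext => t /=; rewrite aff_line.
rewrite -k0 in phi_derivable phi_derive.
split.
  apply/derivable_line; rewrite line_k.
  by apply/derivable1_diffP/differentiable_comp; apply/derivable1_diffP.
rewrite derive_line line_k -derive1E derive1_comp // !derive1E.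
by rewrite k_derive phi_derive mulrC.
Qed.

End DirectionalDerivative.

Section ThirdDerivatives.
Variables (R : realType) (m : nat) (U : set 'rV[R]_m).
Local Notation V := 'rV[R]_m.

Definition partials_on (f : V -> R) (f' : 'I_m -> V -> R) :=
  forall y, U y -> forall j, derivable f y (evec R j) /\ partial j f y = f' j y.

Definition continuous_on (f : V -> R) := forall y, U y -> {for y, continuous f}.

Definition derivs3_on f f1 f2 f3 :=
  [/\ partials_on f f1, forall i, partials_on (f1 i) (f2 i),
      forall i j, partials_on (f2 i j) (f3 i j)
    & [/\ continuous_on f, forall i, continuous_on (f1 i),
          forall i j, continuous_on (f2 i j) & forall i j k, continuous_on (f3 i j k)]].

Section OpenDomain.
Hypothesis U_open : open U.

Let near_eq (f g : V -> R) y : U y -> (forall z, U z -> f z = g z) ->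
  \forall z \near y, f z = g z.
Proof.
move=> Uy fg; have : nbhs y U by apply: open_nbhs_nbhs.
by apply: filterS => z /fg.
Qed.

Lemma partials_on_eq f g g' : partials_on g g' -> (forall z, U z -> f z = g z) ->
  partials_on f g'.
Proof.
move=> gD fg y Uy j; have [g_derivable <-] := gD y Uy j.
have N := near_eq Uy fg.
split; first by apply: near_eq_derivable g_derivable; near=> z; rewrite (near N z).
by rewrite /partial (near_eq_derive _ N).
Unshelve. all: by end_near.
Qed.

Lemma continuous_on_eq f g : continuous_on g -> (forall z, U z -> f z = g z) ->
  continuous_on f.
Proof.
move=> gC fg y Uy; have N : {near y, g =1 f}.
  by have N := near_eq Uy fg; near=> z; rewrite (near N z).
have := gC y Uy; rewrite /prop_for /continuous_at -(fg y Uy) => g_cont.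
by apply: cvg_trans g_cont; exact: near_eq_cvg N.
Unshelve. all: by end_near.
Qed.

Lemma derivs3_C3 f f1 f2 f3 : derivs3_on f f1 f2 f3 ->
  [/\ C3_on U f, forall i j y, U y -> partial j (partial i f) y = f2 i j y
    & forall i j k y, U y -> partial k (partial j (partial i f)) y = f3 i j k y].
Proof.
move=> [D1 D2 D3 [C0 C1 C2 C3]].
have E1 i y : U y -> partial i f y = f1 i y by move=> Uy; case: (D1 y Uy i).
have P1 i : partials_on (partial i f) (f2 i) by apply: partials_on_eq (D2 i) (E1 i).
have E2 i j y : U y -> partial j (partial i f) y = f2 i j y by move=> Uy; case: (P1 i y Uy j).
have P2 i j : partials_on (partial j (partial i f)) (f3 i j).
  exact: partials_on_eq (D3 i j) (E2 i j).
have E3 i j k y : U y -> partial k (partial j (partial i f)) y = f3 i j k y.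
  by move=> Uy; case: (P2 i j y Uy k).
split=> //; do ![split] => //.
- by move=> i y Uy; case: (D1 y Uy i).
- by move=> i; apply: continuous_on_eq (C1 i) (E1 i).
- by move=> i j y Uy; case: (P1 i y Uy j).
- by move=> i j; apply: continuous_on_eq (C2 i j) (E2 i j).
- by move=> i j k y Uy; case: (P2 i j y Uy k).
- by move=> i j k; apply: continuous_on_eq (C3 i j k) (E3 i j k).
Qed.

End OpenDomain.

Lemma derivs3_ext f f1 f2 f3 g g1 g2 g3 :
  f =1 g -> (forall i, f1 i =1 g1 i) -> (forall i j, f2 i j =1 g2 i j) ->
  (forall i j k, f3 i j k =1 g3 i j k) ->
  derivs3_on g g1 g2 g3 -> derivs3_on f f1 f2 f3.
Proof.
move=> /funext-> E1 E2 E3.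
have -> : f1 = g1 by apply/funext => i; apply/funext.
have -> : f2 = g2 by do 2 apply/funext => ?; apply/funext.
by have -> : f3 = g3 by do 3 apply/funext => ?; apply/funext.
Qed.

Let partials_on_add f g f' g' : partials_on f f' -> partials_on g g' ->
  partials_on (fun x => f x + g x) (fun j x => f' j x + g' j x).
Proof.
move=> fD gD y Uy j; have [f_der <-] := fD y Uy j; have [g_der <-] := gD y Uy j.
by split; [apply: derivableD | rewrite /partial deriveD].
Qed.

Let continuous_on_add f g : continuous_on f -> continuous_on g ->
  continuous_on (fun x => f x + g x).
Proof. by move=> fC gC y Uy; exact: cvgD (fC y Uy) (gC y Uy). Qed.

Lemma derivs3_add f f1 f2 f3 g g1 g2 g3 :
  derivs3_on f f1 f2 f3 -> derivs3_on g g1 g2 g3 ->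
  derivs3_on (fun x => f x + g x) (fun i x => f1 i x + g1 i x)
    (fun i j x => f2 i j x + g2 i j x) (fun i j k x => f3 i j k x + g3 i j k x).
Proof.
move=> [D1 D2 D3 [C0 C1 C2 C3]] [D1' D2' D3' [C0' C1' C2' C3']].
split=> [|i|i j|]; try exact: partials_on_add.
by split=> [|i|i j|i j k]; exact: continuous_on_add.
Qed.

Lemma derivs3_cst (c : R) :
  derivs3_on (fun _ => c) (fun _ _ => 0) (fun _ _ _ => 0) (fun _ _ _ _ => 0).
Proof.
have D c' : partials_on (fun _ => c') (fun _ _ => 0).
  by move=> y _ j; have [] := is_derive_cst c' y (evec R j).
have C c' : continuous_on (fun _ => c') by move=> y _; exact: cst_continuous.
by split=> *; [exact: D | exact: D | exact: D | split=> *; exact: C].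
Qed.

Lemma derivs3_sum (I : Type) (r : seq I) F F1 F2 F3 :
  (forall i, derivs3_on (F i) (F1 i) (F2 i) (F3 i)) ->
  derivs3_on (fun x => \sum_(i <- r) F i x) (fun a x => \sum_(i <- r) F1 i a x)
    (fun a b x => \sum_(i <- r) F2 i a b x) (fun a b c x => \sum_(i <- r) F3 i a b c x).
Proof.
move=> FD; elim: r => [|i r IH].
  by apply: derivs3_ext (derivs3_cst 0) => [?|? ?|? ? ?|? ? ? ?]; rewrite big_nil.
by apply: derivs3_ext (derivs3_add (FD i) IH) => [?|? ?|? ? ?|? ? ? ?]; rewrite big_cons.
Qed.

Section AffineComposition.
Variables (c : 'I_m -> R) (b : R) (D : set R).
Hypothesis aff_in_D : forall y, U y -> D (aff c b y).

Let partials_on_aff_comp (p p' : R -> R) f' :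
  (forall z, D z -> is_derive z 1 p (p' z)) ->
  (forall j x, f' j x = c j * p' (aff c b x)) ->
  partials_on (fun x => p (aff c b x)) f'.
Proof.
move=> pD f'E y Uy j.
have [? dE] := is_derive_aff_comp (evec R j) (pD _ (aff_in_D Uy)).
by split=> //; rewrite /partial dE aff_evec f'E.
Qed.

Let continuous_on_aff_comp (p p' : R -> R) :
  (forall z, D z -> is_derive z 1 p (p' z)) -> continuous_on (fun x => p (aff c b x)).
Proof.
move=> pD y Uy; have [p_der _] := pD _ (aff_in_D Uy).
apply: continuous_comp; first exact: continuous_aff.
by apply: differentiable_continuous; apply/derivable1_diffP.
Qed.

Lemma derivs3_aff_comp (p0 p1 p2 p3 p4 : R -> R) :
  (forall z, D z -> is_derive z 1 p0 (p1 z)) ->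
  (forall z, D z -> is_derive z 1 p1 (p2 z)) ->
  (forall z, D z -> is_derive z 1 p2 (p3 z)) ->
  (forall z, D z -> is_derive z 1 p3 (p4 z)) ->
  derivs3_on (fun x => p0 (aff c b x)) (fun j x => c j * p1 (aff c b x))
    (fun j k x => c j * c k * p2 (aff c b x))
    (fun j k l x => c j * c k * c l * p3 (aff c b x)).
Proof.
have scale K (p q : R -> R) : (forall z, D z -> is_derive z 1 p (q z)) ->
    forall z, D z -> is_derive z 1 (fun t => K * p t) (K * q z).
  by move=> pq z Dz; apply: is_deriveZ; apply: pq.
move=> d0 d1 d2 d3; split.
- exact: partials_on_aff_comp d0 _.
- by move=> j; apply: partials_on_aff_comp (scale (c j) _ _ d1) _ => k x; ring.
- by move=> j k; apply: partials_on_aff_comp (scale (c j * c k) _ _ d2) _ => l x; ring.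
split.
- exact: continuous_on_aff_comp d0.
- move=> j; exact: continuous_on_aff_comp (scale (c j) _ _ d1).
- move=> j k; exact: continuous_on_aff_comp (scale (c j * c k) _ _ d2).
- move=> j k l; exact: continuous_on_aff_comp (scale (c j * c k * c l) _ _ d3).
Qed.

End AffineComposition.
End ThirdDerivatives.

Section Forms.
Variables (R : realType) (m : nat).
Local Notation V := 'rV[R]_m.

Definition qf (M : 'I_m -> 'I_m -> R) (u : V) := \sum_i \sum_j M i j * u 0 i * u 0 j.

Definition cf (M : 'I_m -> 'I_m -> 'I_m -> R) (u : V) :=
  \sum_i \sum_j \sum_k M i j k * u 0 i * u 0 j * u 0 k.

Lemma qf_add A B u : qf (fun i j => A i j + B i j) u = qf A u + qf B u.
Proof.
rewrite /qf -big_split; apply: eq_bigr => i _; rewrite -big_split.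
by apply: eq_bigr => j _; rewrite !mulrDl.
Qed.

Lemma cf_add A B u : cf (fun i j k => A i j k + B i j k) u = cf A u + cf B u.
Proof.
rewrite /cf -big_split; apply: eq_bigr => i _; rewrite -big_split.
by apply: eq_bigr => j _; rewrite -big_split; apply: eq_bigr => k _; rewrite !mulrDl.
Qed.

Lemma qf_sum (I : Type) (r : seq I) (G : I -> 'I_m -> 'I_m -> R) u :
  qf (fun i j => \sum_(t <- r) G t i j) u = \sum_(t <- r) qf (G t) u.
Proof.
elim: r => [|t r IH].
  by rewrite big_nil /qf big1 // => i _; rewrite big1 // => j _; rewrite big_nil !mul0r.
rewrite big_cons -IH -qf_add; congr qf; apply/funext => i; apply/funext => j.
by rewrite big_cons.
Qed.

Lemma cf_sum (I : Type) (r : seq I) (G : I -> 'I_m -> 'I_m -> 'I_m -> R) u :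
  cf (fun i j k => \sum_(t <- r) G t i j k) u = \sum_(t <- r) cf (G t) u.
Proof.
elim: r => [|t r IH].
  rewrite big_nil /cf big1 // => i _; rewrite big1 // => j _; rewrite big1 // => k _.
  by rewrite big_nil !mul0r.
rewrite big_cons -IH -cf_add; congr cf.
by do 2 apply/funext => ?; apply/funext => k; rewrite big_cons.
Qed.

Lemma qf_outer (c : 'I_m -> R) (W : R) u :
  qf (fun i j => c i * c j * W) u = W * aff c 0 u ^+ 2.
Proof.
rewrite /qf /aff addr0 expr2 big_distrl /= mulr_sumr; apply: eq_bigr => i _.
by rewrite big_distrr /= mulr_sumr; apply: eq_bigr => j _; ring.
Qed.

Lemma cf_outer (c : 'I_m -> R) (W : R) u :
  cf (fun i j k => c i * c j * c k * W) u = W * aff c 0 u ^+ 3.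
Proof.
rewrite /cf /aff addr0 2!exprS expr1 big_distrl /= mulr_sumr; apply: eq_bigr => i _.
rewrite big_distrl /= big_distrr /= mulr_sumr; apply: eq_bigr => j _.
by rewrite big_distrr /= big_distrr /= mulr_sumr; apply: eq_bigr => k _; ring.
Qed.

Lemma qf_mx (H : 'M[R]_m) (u : V) : (u *m H *m u^T) 0 0 = qf (fun i j => H i j) u.
Proof.
rewrite /qf mxE exchange_big /=; apply: eq_bigr => i _.
by rewrite !mxE big_distrl /=; apply: eq_bigr => j _; ring.
Qed.

Lemma qfZ M (s : R) (v : V) : qf M (s *: v) = s ^+ 2 * qf M v.
Proof.
rewrite /qf mulr_sumr; apply: eq_bigr => i _; rewrite mulr_sumr.
by apply: eq_bigr => j _; rewrite !mxE; ring.
Qed.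

End Forms.

Section Convexity.
Variables (R : realType) (m : nat) (U : set 'rV[R]_m).

Lemma convex_on_add f g : convex_on U f -> convex_on U g ->
  convex_on U (fun x => f x + g x).
Proof.
move=> fC gC x y l Ux Uy l01.
by rewrite !mulrDr addrACA; exact: lerD (fC x y l Ux Uy l01) (gC x y l Ux Uy l01).
Qed.

Lemma convex_on_sum (I : Type) (r : seq I) (F : I -> 'rV[R]_m -> R) :
  (forall i, convex_on U (F i)) -> convex_on U (fun x => \sum_(i <- r) F i x).
Proof.
move=> FC; elim: r => [|i r IH].
  by move=> x y l _ _ _; rewrite !big_nil !mulr0 addr0.
move=> x y l Ux Uy l01; rewrite !big_cons.
exact: (convex_on_add (FC i) IH).
Qed.

Lemma convex_on_aff_comp c b (D : set R) (p : R -> R) :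
  (forall y, U y -> D (aff c b y)) ->
  (forall z1 z2 l, D z1 -> D z2 -> 0 <= l <= 1 ->
     p (l * z1 + (1 - l) * z2) <= l * p z1 + (1 - l) * p z2) ->
  convex_on U (fun x => p (aff c b x)).
Proof.
by move=> affD pC x y l Ux Uy l01; rewrite aff_conv; exact: pC (affD _ Ux) (affD _ Uy) l01.
Qed.

End Convexity.

Section ScalarDerivatives.
Variable R : realType.

Lemma is_derive_invX (k : nat) (z : R) : z != 0 ->
  is_derive z 1 (fun t : R => t^-1 ^+ k) (- k%:R * z^-1 ^+ k.+1).
Proof.
move=> z0; have inv : is_derive z (1 : R) (fun t : R => t^-1) (- z^-1 ^+ 2).
  have := is_deriveV z0 (is_derive_id z (1 : R)).
  by rewrite exprVn /GRing.scale /= mulr1.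
have := is_deriveX k inv; rewrite (_ : _ ^+ k = (fun t : R => t^-1 ^+ k)).
  move=> H; apply: is_derive_eq H _; rewrite /GRing.scale /=.
  by case: k => [|k]; rewrite ?mul0r ?mulr0 ?oppr0 // !exprS /=; ring.
by apply/funext => s; rewrite exprfctE.
Qed.

Definition barrier (e z : R) := - e^-1 * ln z.
Definition barrier' (e z : R) := - e^-1 * z^-1.
Definition barrier'' (e z : R) := e^-1 * z^-1 ^+ 2.
Definition barrier''' (e z : R) := - (2 * e^-1) * z^-1 ^+ 3.
Definition barrier'''' (e z : R) := 6 * e^-1 * z^-1 ^+ 4.

Lemma is_derive_barrier (e z : R) : 0 < z -> is_derive z 1 (barrier e) (barrier' e z).
Proof. by move=> z0; apply: is_deriveZ; exact: is_derive1_ln. Qed.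

Lemma is_derive_barrier' (e z : R) : 0 < z -> is_derive z 1 (barrier' e) (barrier'' e z).
Proof.
move=> z0; apply: is_derive_eq (is_deriveZ _ (is_derive_invX 1 (lt0r_neq0 z0))) _.
by rewrite /barrier'' /GRing.scale /=; ring.
Qed.

Lemma is_derive_barrier'' (e z : R) : 0 < z -> is_derive z 1 (barrier'' e) (barrier''' e z).
Proof.
move=> z0; apply: is_derive_eq (is_deriveZ _ (is_derive_invX 2 (lt0r_neq0 z0))) _.
by rewrite /barrier''' /GRing.scale /=; ring.
Qed.

Lemma is_derive_barrier''' (e z : R) : 0 < z -> is_derive z 1 (barrier''' e) (barrier'''' e z).
Proof.
move=> z0; apply: is_derive_eq (is_deriveZ _ (is_derive_invX 3 (lt0r_neq0 z0))) _.
by rewrite /barrier'''' /GRing.scale /=; ring.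
Qed.

Lemma barrier_conv (e z1 z2 l : R) : 0 < e -> 0 < z1 -> 0 < z2 -> 0 <= l <= 1 ->
  barrier e (l * z1 + (1 - l) * z2) <= l * barrier e z1 + (1 - l) * barrier e z2.
Proof.
move=> e0 z10 z20 /andP[l0 l1]; rewrite /barrier.
have -> : l * (- e^-1 * ln z1) + (1 - l) * (- e^-1 * ln z2) =
  - e^-1 * (l * ln z1 + (1 - l) * ln z2) by ring.
apply: ler_wnM2l; first by rewrite oppr_le0 invr_ge0 ltW.
by have := concave_ln (Itv01 l0 l1) z10 z20; rewrite !convRE.
Qed.

Lemma barrier_ge0 (e z : R) : 0 < e -> 0 < z -> z <= 1 -> 0 <= barrier e z.
Proof.
move=> e_gt0 z_gt0 z_le1; rewrite /barrier mulNr -mulrN.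
by apply: mulr_ge0; [rewrite invr_ge0 ltW | rewrite oppr_ge0 ln_le0].
Qed.

Lemma barrier_ge (e z A : R) : 0 < e -> 0 < z -> z <= expR (- A * e) -> A <= barrier e z.
Proof.
move=> e_gt0 z_gt0; rewrite -ler_ln ?posrE ?expR_gt0 // expRK /barrier => ln_le.
rewrite [X in X <= _](_ : A = - e^-1 * (- A * e)); last by field; rewrite gt_eqF.
by apply: ler_wnM2l; rewrite // oppr_le0 invr_ge0 ltW.
Qed.

Definition kquad (K z : R) := K * z ^+ 2.
Definition kquad' (K z : R) := K * (2 * z).
Definition kquad'' (K z : R) := K * 2.

Lemma is_derive_kquad (K z : R) : is_derive z 1 (kquad K) (kquad' K z).
Proof.
have := is_deriveZ K (is_deriveX 2 (is_derive_id z (1 : R))).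
rewrite (_ : _ ^+ 2 = (fun t : R => t ^+ 2)); last by apply/funext => s; rewrite exprfctE.
by move=> H; apply: is_derive_eq H _; rewrite /kquad' /GRing.scale /=; ring.
Qed.

Lemma is_derive_kquad' (K z : R) : is_derive z 1 (kquad' K) (kquad'' K z).
Proof.
apply: is_derive_eq (is_deriveZ K (is_deriveZ 2 (is_derive_id z (1 : R)))) _.
by rewrite /kquad'' /GRing.scale /= mulr1.
Qed.

Lemma kquad_conv (K z1 z2 l : R) : 0 <= K -> 0 <= l <= 1 ->
  kquad K (l * z1 + (1 - l) * z2) <= l * kquad K z1 + (1 - l) * kquad K z2.
Proof.
move=> K0 /andP[l0 l1]; rewrite /kquad -subr_ge0.
have -> : l * (K * z1 ^+ 2) + (1 - l) * (K * z2 ^+ 2) - K * (l * z1 + (1 - l) * z2) ^+ 2 =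
  K * (l * (1 - l)) * (z1 - z2) ^+ 2 by ring.
by rewrite mulr_ge0 ?sqr_ge0 // mulr_ge0 // mulr_ge0 // subr_ge0.
Qed.

End ScalarDerivatives.

Lemma sum_cube_le (R : rcfType) (I : finType) (e x : I -> R) (E Q : R) :
  (forall i, 0 < e i) -> (forall i, e i <= E) -> \sum_i (e i)^-1 * x i ^+ 2 <= Q ->
  `|\sum_i 2 * (e i)^-1 * x i ^+ 3| <= 2 * Num.sqrt E * Num.sqrt Q ^+ 3.
Proof.
move=> e_gt0 e_le sum_le; pose p i := (e i)^-1 * x i ^+ 2.
have p_ge0 i : 0 <= p i by rewrite mulr_ge0 ?sqr_ge0 // invr_ge0 ltW.
have Q_ge0 : 0 <= Q by apply: le_trans sum_le; apply: sumr_ge0 => i _; exact: p_ge0.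
have p_le i : p i <= Q.
  apply: le_trans sum_le; rewrite (bigD1 i) //= lerDl.
  by apply: sumr_ge0 => j _; exact: p_ge0.
have x_le i : `|x i| <= Num.sqrt E * Num.sqrt Q.
  have E_ge0 : 0 <= E := le_trans (ltW (e_gt0 i)) (e_le i).
  rewrite -sqrtrM // -[`|x i|]sqrtr_sqr ler_sqrt ?mulr_ge0 //.
  have -> : x i ^+ 2 = e i * p i by rewrite /p mulrA mulfV ?mul1r // gt_eqF.
  by apply: ler_pM => //; exact: ltW.
have term_le i : `|2 * (e i)^-1 * x i ^+ 3| <= 2 * (Num.sqrt E * Num.sqrt Q) * p i.
  have -> : `|2 * (e i)^-1 * x i ^+ 3| = 2 * p i * `|x i|.
    rewrite !normrM normr_nat normfV (gtr0_norm (e_gt0 i)).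
    by rewrite /p -[x i ^+ 2]real_normK ?num_real //; ring.
  by rewrite [2 * p i * _]mulrAC ler_wpM2r // ler_wpM2l.
apply: le_trans (ler_norm_sum _ _ _) _; apply: le_trans (ler_sum _ (fun i _ => term_le i)) _.
have -> : 2 * Num.sqrt E * Num.sqrt Q ^+ 3 =
  2 * (Num.sqrt E * Num.sqrt Q) * Num.sqrt Q ^+ 2 by ring.
by rewrite -mulr_sumr sqr_sqrtr // ler_wpM2l // !mulr_ge0 ?sqrtr_ge0.
Qed.

Section Simplex.
Variables (R : realType) (n : nat).
Local Notation V := 'rV[R]_n.+1.
Local Notation vbar := (@vbar R n.+2).
Local Notation Cset := (@Cset R n.+2).

Definition colJ (i : 'I_n.+2) (j : 'I_n.+1) : R := Jmx R n.+2 j i.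

Definition Cpos : set V := [set x | forall i, 0 < vbar x 0 i].

Lemma vbar_aff x i : vbar x 0 i = aff (colJ i) (e_last R n.+2 0 i) x.
Proof.
rewrite /Defs.vbar /aff !mxE addrC; congr (_ + _).
by apply: eq_bigr => j _; rewrite mulrC.
Qed.

Lemma vbar_widen (x : V) j : vbar x 0 (widen_ord (leqnSn _) j) = x 0 j.
Proof.
rewrite vbar_aff /aff /e_last /colJ mxE /= (ltn_eqF (ltn_ord j)) addr0.
rewrite (bigD1 j) //= big1 => [|k kj]; first by rewrite mxE eqxx mul1r addr0.
by rewrite mxE /= (ltn_eqF (ltn_ord j)) ifN ?mul0r // eq_sym.
Qed.

Lemma vbar_last (x : V) : vbar x 0 ord_max = 1 - \sum_j x 0 j.
Proof.
rewrite vbar_aff /aff /e_last /colJ mxE /= eqxx addrC -sumrN; congr (_ + _).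
by apply: eq_bigr => k _; rewrite mxE (gtn_eqF (ltn_ord k)) eqxx mulN1r.
Qed.

Let widen_or_max (i : 'I_n.+2) :
  (exists j : 'I_n.+1, i = widen_ord (leqnSn _) j) \/ i = ord_max.
Proof.
case: (unliftP ord_max i) => [j ->|->]; last by right.
by left; exists j; apply: val_inj; exact: lift_max.
Qed.

Lemma vbar_sum (x : V) : \sum_i vbar x 0 i = 1.
Proof.
rewrite big_ord_recr /= vbar_last.
by under eq_bigr do rewrite vbar_widen; rewrite addrC subrK.
Qed.

Lemma Cset_vbar (x : V) : Cset x <-> forall i, 0 <= vbar x 0 i.
Proof.
split=> [[x_ge0 sum_le1] i | vbar_ge0].
  by case: (widen_or_max i) => [[j ->]|->]; rewrite ?vbar_widen ?vbar_last ?subr_ge0.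
split=> [j|]; first by rewrite -vbar_widen.
by have := vbar_ge0 ord_max; rewrite vbar_last subr_ge0.
Qed.

Lemma vbar_le1 (x : V) i : Cpos x -> vbar x 0 i <= 1.
Proof.
move=> xpos; rewrite -(vbar_sum x) (bigD1 i) //= lerDl.
by apply: sumr_ge0 => j _; exact/ltW/xpos.
Qed.

Lemma open_Cpos : open Cpos.
Proof.
rewrite openE => x xpos.
apply: (@filter_forall V 'I_n.+2 (fun i y => 0 < vbar y 0 i) (nbhs x)) => i.
have := cvgr_gt _ (@continuous_aff _ _ (colJ i) (e_last R n.+2 0 i) x) 0.
rewrite -vbar_aff => /(_ _ (xpos i)); apply: filterS => y.
by rewrite vbar_aff.
Qed.

Lemma closed_Cset : closed Cset.
Proof.
move=> x x_cl; apply/Cset_vbar => i; rewrite vbar_aff leNgt; apply/negP => neg.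
have [y [/Cset_vbar/(_ i)]] := x_cl _ (cvgr_lt _ (@continuous_aff _ _ _ _ x) 0 neg).
by rewrite vbar_aff /= leNgt => /negP.
Qed.

Lemma interior_Cset : interior Cset = Cpos.
Proof.
apply/seteqP; split=> x; last first.
  move=> xpos; apply: filterS (open_nbhs_nbhs (conj open_Cpos xpos)) => y ypos.
  by apply/Cset_vbar => i; exact/ltW/ypos.
move=> x_int i; have /Cset_vbar/(_ i) := interior_subset x_int.
rewrite le_eqVlt => /predU1P[vbar0|//]; exfalso.
pose v : V := \row_j (- colJ i j).
have v_desc : aff (colJ i) 0 v < 0.
  have [j0 cj0] : exists j, colJ i j != 0.
    case: (widen_or_max i) => [[j ->]|->].
      by exists j; rewrite /colJ /Jmx mxE /= eqxx oner_neq0.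
    by exists 0; rewrite /colJ /Jmx mxE /= eqxx oppr_eq0 oner_neq0.
  rewrite /aff addr0 (eq_bigr (fun j => - colJ i j ^+ 2)) => [|j _]; last first.
    by rewrite mxE mulrN -expr2.
  rewrite sumrN oppr_lt0 (bigD1 j0) //= ltr_pwDl ?exprn_even_gt0 //.
  by apply: sumr_ge0 => j _; exact: sqr_ge0.
have line_cvg : (fun h : R => h *: v + x) @ 0 --> x.
  have := cvgD (@scalel_continuous _ _ v 0) (cvg_cst x).
  by rewrite scale0r add0r; exact.
move/nbhs_ballP: (line_cvg _ x_int) => [e /= e0 ball_in].
have e2_in : ball (0 : R) e (e / 2).
  by rewrite -ball_normE /ball_ /= sub0r normrN ger0_norm ?divr_ge0 ?ltW //; lra.
have /Cset_vbar/(_ i) := ball_in _ e2_in.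
rewrite vbar_aff aff_line -vbar_aff -vbar0 add0r leNgt => /negP; apply.
by rewrite pmulr_rlt0 // divr_gt0.
Qed.

Lemma compact_Cset : compact Cset.
Proof.
apply: (subclosed_compact closed_Cset
  (rV_compact (fun _ => @segment_compact R 0 1))) => x [x_ge0 sum_le1] i /=.
rewrite in_itv /= x_ge0 /=; apply: le_trans sum_le1.
by rewrite (bigD1 i) //= lerDl; apply: sumr_ge0 => j _.
Qed.

Lemma convex_Cset : Defs.convex_set Cset.
Proof.
move=> x y l /Cset_vbar x_ge0 /Cset_vbar y_ge0 /andP[l_ge0 l_le1].
apply/Cset_vbar => i; rewrite vbar_aff aff_conv -!vbar_aff.
by apply: addr_ge0; apply: mulr_ge0 => //; lra.
Qed.

Lemma vbar_center i : vbar (const_mx (n.+2)%:R^-1) 0 i = (n.+2)%:R^-1.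
Proof.
case: (widen_or_max i) => [[j ->]|->]; first by rewrite vbar_widen mxE.
rewrite vbar_last (eq_bigr (fun _ => (n.+2)%:R^-1)) => [|j _]; last by rewrite mxE.
rewrite sumr_const card_ord -[_ *+ n.+1]mulr_natl.
have d_neq0 : (n.+2)%:R != 0 :> R by rewrite pnatr_eq0.
by rewrite -{1}(mulfV d_neq0) -mulrBl -natrB // subSnn mul1r.
Qed.

Lemma Cpos_center : Cpos (const_mx (n.+2)%:R^-1).
Proof. by move=> i; rewrite vbar_center invr_gt0 ltr0Sn. Qed.

End Simplex.

Arguments colJ {R n} i j.

Section LearningRates.
Variables (R : realType) (d : nat) (eta T : R) (rho : 'rV[R]_d).

Lemma eta_i_gt0 i : 0 < eta -> 0 < eta_i eta T rho i.
Proof. by move=> eta_gt0; rewrite mulr_gt0 // expR_gt0. Qed.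

Lemma eta_i_le i : 0 < eta -> 1 < T -> rho 0 i <= d%:R * T ->
  eta_i eta T rho i <= eta * expR 1.
Proof.
move=> eta_gt0 T_gt1 rho_le; rewrite ler_pM2l // ler_expR ler_pdivrMr ?ln_gt0 // mul1r.
have [|ratio_gt0] := leP (rho 0 i / d%:R) 0; first by move/ln0->; rewrite ltW // ln_gt0.
have d_gt0 : 0 < d%:R :> R.
  by rewrite lt0r ler0n andbT; apply: contraTneq ratio_gt0 => ->; rewrite invr0 mulr0 ltxx.
by rewrite ler_ln ?posrE ?(lt_trans ltr01 T_gt1) // ler_pdivrMr // mulrC.
Qed.

End LearningRates.

Section PhiDerivatives.
Variables (R : realType) (n : nat) (eta beta T : R) (rho : 'rV[R]_n.+2)
  (g w : nat -> 'rV[R]_n.+1) (t : nat).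
Local Notation V := 'rV[R]_n.+1.
Local Notation vbar := (@vbar R n.+2).
Local Notation P := (Phi eta beta T rho g w t).
Local Notation e i := (eta_i eta T rho i).
Local Notation elast i := (e_last R n.+2 0 i).
Local Notation gc s := (fun k => g s 0 k).
Local Notation go s := (- dotp (g s) (w s)).

Definition unitc (j k : 'I_n.+1) : R := (k == j)%:R.

Lemma aff_unitc j (x : V) : aff (unitc j) 0 x = x 0 j.
Proof.
rewrite /aff addr0 (bigD1 j) //= big1 ?addr0 => [|k /negbTE kj]; last first.
  by rewrite /unitc kj mul0r.
by rewrite /unitc eqxx mul1r.
Qed.

Definition Phi_sum (x : V) :=
  \sum_i barrier (e i) (aff (colJ i) (elast i) x) +
  (\sum_j kquad (beta * (n.+2)%:R / 8) (aff (unitc j) 0 x) +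
   \sum_(1 <= s < t.+1) kquad (beta / 8) (aff (gc s) (go s) x)).

Lemma Phi_sumE : P = Phi_sum.
Proof.
apply/funext => x; rewrite /Phi /Phi_sum /Psi addrA; congr (_ + _ + _).
- by rewrite -sumrN; apply: eq_bigr => i _; rewrite vbar_aff /barrier; ring.
- by rewrite /sqnorm mulr_sumr; apply: eq_bigr => j _; rewrite aff_unitc.
- rewrite mulr_sumr; apply: eq_bigr => s _; rewrite /kquad /aff /dotp -sumrN -big_split /=.
  by congr (_ * (_ ^+ 2)); apply: eq_bigr => j _; rewrite !mxE; ring.
Qed.

Definition Phi1 a x :=
  \sum_i colJ i a * barrier' (e i) (aff (colJ i) (elast i) x) +
  (\sum_j unitc j a * kquad' (beta * (n.+2)%:R / 8) (aff (unitc j) 0 x) +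
   \sum_(1 <= s < t.+1) g s 0 a * kquad' (beta / 8) (aff (gc s) (go s) x)).

Definition Phi2 a b x :=
  \sum_i colJ i a * colJ i b * barrier'' (e i) (aff (colJ i) (elast i) x) +
  (\sum_j unitc j a * unitc j b * kquad'' (beta * (n.+2)%:R / 8) (aff (unitc j) 0 x) +
   \sum_(1 <= s < t.+1) g s 0 a * g s 0 b * kquad'' (beta / 8) (aff (gc s) (go s) x)).

(* The vanishing third derivatives of the quadratic terms are kept as zero
   summands, in the shape produced by [derivs3_sum]. *)
Definition Phi3 a b c (x : V) :=
  \sum_i colJ i a * colJ i b * colJ i c * barrier''' (e i) (aff (colJ i) (elast i) x) +
  (\sum_(j : 'I_n.+1) unitc j a * unitc j b * unitc j c * 0 +
   \sum_(1 <= s < t.+1) g s 0 a * g s 0 b * g s 0 c * 0).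

Lemma derivs3_Phi : derivs3_on (@Cpos R n) P Phi1 Phi2 Phi3.
Proof.
have kquad_derivs K c0 b0 : derivs3_on (@Cpos R n) (fun x => kquad K (aff c0 b0 x))
    (fun a x => c0 a * kquad' K (aff c0 b0 x))
    (fun a b x => c0 a * c0 b * kquad'' K (aff c0 b0 x)) (fun a b c _ => c0 a * c0 b * c0 c * 0).
  apply: (derivs3_aff_comp (D := setT)) => [//|z _|z _].
  - exact: is_derive_kquad.
  - exact: is_derive_kquad'.
rewrite Phi_sumE; apply: derivs3_add.
  apply: derivs3_sum => i.
  apply: (derivs3_aff_comp (D := [set z | 0 < z])) => [y ypos|z|z|z|z] /=.
  - by rewrite -vbar_aff; exact: ypos.
  - exact: is_derive_barrier.
  - exact: is_derive_barrier'.
  - exact: is_derive_barrier''.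
  - exact: is_derive_barrier'''.
by apply: derivs3_add; apply: derivs3_sum => i; exact: kquad_derivs.
Qed.

Lemma C3_Phi : C3_on (@Cpos R n) P.
Proof. by case: (derivs3_C3 (@open_Cpos R n) derivs3_Phi). Qed.

(* [aff (colJ i) 0 u] is the i-th coordinate of J^T u. *)
Definition dir_ratio (y u : V) i := aff (colJ i) 0 u / vbar y 0 i.

Lemma hess_Phi y : Cpos y -> hess P y = \matrix_(i, j) Phi2 i j y.
Proof.
move=> ypos; have [_ E2 _] := derivs3_C3 (@open_Cpos R n) derivs3_Phi.
by apply/matrixP => i j; rewrite !mxE E2.
Qed.

Lemma hess_Phi_sym y : Cpos y -> (hess P y)^T = hess P y.
Proof.
move=> ypos; rewrite hess_Phi //; apply/matrixP => i j; rewrite !mxE /Phi2.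
by congr (_ + (_ + _)); apply: eq_bigr => k _; rewrite [X in X * _]mulrC.
Qed.

Lemma qf_hess_Phi y u : Cpos y -> (u *m hess P y *m u^T) 0 0 =
  \sum_i (e i)^-1 * dir_ratio y u i ^+ 2 +
  beta / 4 * ((n.+2)%:R * \sum_j u 0 j ^+ 2 + \sum_(1 <= s < t.+1) aff (gc s) 0 u ^+ 2).
Proof.
move=> ypos; rewrite qf_mx hess_Phi // (_ : qf _ u = qf (fun i j => Phi2 i j y) u); last first.
  by congr qf; do 2 apply/funext => ?; rewrite mxE.
rewrite /Phi2 !qf_add !qf_sum [beta / 4 * _]mulrDr mulrA !mulr_sumr.
congr (_ + (_ + _)).
- apply: eq_bigr => i _; rewrite qf_outer /barrier'' /dir_ratio -vbar_aff exprMn.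
  by rewrite -mulrA [_ ^+ 2 * _]mulrC.
- by apply: eq_bigr => j _; rewrite qf_outer !aff_unitc /kquad''; field.
- by apply: eq_bigr => s _; rewrite qf_outer /kquad''; field.
Qed.

Lemma D3_Phi y u : Cpos y -> D3 P y u = - \sum_i 2 * (e i)^-1 * dir_ratio y u i ^+ 3.
Proof.
move=> ypos; have [_ _ E3] := derivs3_C3 (@open_Cpos R n) derivs3_Phi.
rewrite (_ : D3 P y u = cf (fun i j k => Phi3 i j k y) u); last first.
  by apply: eq_bigr => i _; apply: eq_bigr => j _; apply: eq_bigr => k _; rewrite E3.
rewrite /Phi3 !cf_add !cf_sum.
rewrite [X in _ + (X + _)]big1 => [|j _]; last by rewrite cf_outer mul0r.
rewrite [X in _ + (_ + X)]big1 => [|s _]; last by rewrite cf_outer mul0r.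
rewrite !addr0 -sumrN; apply: eq_bigr => i _.
rewrite cf_outer /barrier''' /dir_ratio -vbar_aff exprMn.
by rewrite !mulNr -[_ * _ * aff _ _ _ ^+ 3]mulrA [_ ^+ 3 * _]mulrC.
Qed.

Section PhiBounds.
Hypotheses (eta_gt0 : 0 < eta) (beta_gt0 : 0 < beta).
Local Notation quad y u := ((u *m hess P y *m u^T) 0 0).

Let reg_ge0 (u : V) :
  0 <= beta / 4 * ((n.+2)%:R * \sum_j u 0 j ^+ 2 + \sum_(1 <= s < t.+1) aff (gc s) 0 u ^+ 2).
Proof.
apply: mulr_ge0; first by rewrite divr_ge0 // ltW.
apply: addr_ge0; last by apply: sumr_ge0 => s _; exact: sqr_ge0.
by apply: mulr_ge0 => //; apply: sumr_ge0 => j _; exact: sqr_ge0.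
Qed.

Let barrier_term_ge0 y u i : 0 <= (e i)^-1 * dir_ratio y u i ^+ 2.
Proof. by rewrite mulr_ge0 ?sqr_ge0 // invr_ge0 ltW // eta_i_gt0. Qed.

Lemma barrier_qf_le_hess y u : Cpos y -> \sum_i (e i)^-1 * dir_ratio y u i ^+ 2 <= quad y u.
Proof. by move=> ypos; rewrite qf_hess_Phi // lerDl; exact: reg_ge0. Qed.

Lemma barrier_term_le_hess y u i : Cpos y -> (e i)^-1 * dir_ratio y u i ^+ 2 <= quad y u.
Proof.
move=> ypos; apply: le_trans (barrier_qf_le_hess u ypos); rewrite (bigD1 i) //= lerDl.
by apply: sumr_ge0 => j _; exact: barrier_term_ge0.
Qed.

Lemma qf_hess_Phi_ge0 (y u : V) : Cpos y -> 0 <= quad y u.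
Proof.
move=> ypos; apply: le_trans (barrier_qf_le_hess u ypos).
by apply: sumr_ge0 => i _; exact: barrier_term_ge0.
Qed.

Lemma qf_hess_Phi_gt0 (y u : V) : Cpos y -> u != 0 -> 0 < quad y u.
Proof.
move=> ypos u_neq0; rewrite qf_hess_Phi //.
apply: ltr_wpDl; first by apply: sumr_ge0 => i _; exact: barrier_term_ge0.
have [j uj_neq0] : exists j, u 0 j != 0.
  apply/existsP; apply: contraNT u_neq0 => /existsPn u0.
  by apply/eqP/rowP => j; rewrite mxE; exact/eqP/negPn/u0.
apply: mulr_gt0; first by rewrite divr_gt0.
apply: ltr_wpDr; first by apply: sumr_ge0 => s _; exact: sqr_ge0.
rewrite mulr_gt0 ?ltr0Sn // (bigD1 j) //= ltr_wpDr ?exprn_even_gt0 //.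
by apply: sumr_ge0 => k _; exact: sqr_ge0.
Qed.

Lemma hess_Phi_unit y : Cpos y -> hess P y \in unitmx.
Proof.
move=> ypos; rewrite unitmxE unitfE; apply/negP => /det0P [v v_neq0 vH0].
by have := qf_hess_Phi_gt0 ypos v_neq0; rewrite vH0 mul0mx mxE ltxx.
Qed.

Lemma convex_Phi : convex_on (@Cpos R n) P.
Proof.
rewrite Phi_sumE; apply: convex_on_add; last apply: convex_on_add; apply: convex_on_sum => i.
- apply: (convex_on_aff_comp (D := [set z | 0 < z])) => [y ypos|z1 z2 l z1_gt0 z2_gt0 l01].
    by rewrite /= -vbar_aff.
  by apply: barrier_conv => //; exact: eta_i_gt0.
- apply: (convex_on_aff_comp (D := setT)) => // z1 z2 l _ _; apply: kquad_conv.
  by rewrite !mulr_ge0 ?invr_ge0 // ltW.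
- apply: (convex_on_aff_comp (D := setT)) => // z1 z2 l _ _; apply: kquad_conv.
  by rewrite divr_ge0 // ltW.
Qed.

Lemma Phi_ge_barrier y i : Cpos y -> barrier (e i) (vbar y 0 i) <= P y.
Proof.
move=> ypos; rewrite Phi_sumE /Phi_sum; apply: ler_wpDr.
  by apply: addr_ge0; apply: sumr_ge0 => j _;
    rewrite /kquad mulr_ge0 ?sqr_ge0 // ?divr_ge0 ?mulr_ge0 // ltW.
rewrite (bigD1 i) //= vbar_aff lerDl; apply: sumr_ge0 => j _.
by rewrite -vbar_aff barrier_ge0 ?vbar_le1 // eta_i_gt0.
Qed.

Lemma Phi_cvgy (xs : nat -> V) x : (forall k, Cpos (xs k)) -> xs @ \oo --> x ->
  ~ Cpos x -> P \o xs @ \oo --> +oo.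
Proof.
move=> xs_pos xs_cvg /existsNP[i /negP]; rewrite -leNgt vbar_aff => x_le0.
have cvg_i := cvg_comp _ _ xs_cvg (@continuous_aff _ _ (colJ i) (elast i) x).
apply/cvgryPge => A; have e_gt0 : 0 < e i by exact: eta_i_gt0.
have small := cvgr_lt _ cvg_i _ (le_lt_trans x_le0 (expR_gt0 (- A * e i))).
near=> k; apply: le_trans (Phi_ge_barrier i (xs_pos k)).
apply: barrier_ge => //; first exact: xs_pos.
by rewrite vbar_aff ltW //; near: k; exact: small.
Unshelve. all: by end_near.
Qed.

Variable E : R.
Hypothesis e_le : forall i, e i <= E.

Lemma D3_Phi_le y u : Cpos y -> `|D3 P y u| <= 2 * Num.sqrt E * anorm (hess P y) u ^+ 3.
Proof.
move=> ypos; rewrite D3_Phi // normrN /anorm.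
apply: sum_cube_le => //; last exact: barrier_qf_le_hess.
by move=> i; exact: eta_i_gt0.
Qed.

Lemma Phi_self_concordant : self_concordant (@Cset R n.+2) P (Num.sqrt E).
Proof.
rewrite /self_concordant interior_Cset; split; first exact: convex_Cset.
split; first exact: compact_Cset.
split; first by exists (const_mx (n.+2)%:R^-1); exact: Cpos_center.
split; first exact: sqrtr_ge0.
split; first exact: convex_Phi.
split; first exact: C3_Phi.
split=> [xs x xs_pos xs_cvg [_ x_not_pos]|x u]; first exact: Phi_cvgy xs_cvg _.
exact: D3_Phi_le.
Qed.

Lemma Cpos_dikin (y v : V) : Cpos y -> E * quad y v < 1 -> Cpos (y - v).
Proof.
move=> ypos Eq_lt1 i; have e_gt0 : 0 < e i by exact: eta_i_gt0.
have r2_lt1 : dir_ratio y v i ^+ 2 < 1.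
  apply: le_lt_trans Eq_lt1; apply: (@le_trans _ _ (e i * quad y v)).
    have := barrier_term_le_hess v i ypos.
    by rewrite -(ler_pM2l e_gt0) mulrA mulfV ?gt_eqF // mul1r.
  by apply: ler_wpM2r; [exact: qf_hess_Phi_ge0 | exact: e_le].
have : dir_ratio y v i < 1 by nra.
rewrite /dir_ratio ltr_pdivrMr // mul1r => lt_vbar.
have -> : y - v = (-1) *: v + y by rewrite scaleN1r addrC.
by rewrite vbar_aff aff_line -vbar_aff mulN1r subr_gt0.
Qed.

Lemma Cpos_newton (y nab : V) c : Cpos y -> 0 <= c -> E <= c ^+ 2 ->
  Cpos (y - (1 + 4 * c * anorm (invmx (hess P y)) nab)^-1 *: (nab *m invmx (hess P y))).
Proof.
move=> ypos c_ge0 E_le; set Hi := invmx _; set a := anorm Hi nab.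
set s := (1 + _)^-1; apply: Cpos_dikin => //.
have HiT : Hi^T = Hi by rewrite trmx_inv hess_Phi_sym.
have qv : quad y (nab *m Hi) = (nab *m Hi *m nab^T) 0 0.
  by rewrite trmx_mul HiT -(mulmxA nab Hi) mulVmx ?hess_Phi_unit // mulmx1 mulmxA.
have a2 : a ^+ 2 = quad y (nab *m Hi) by rewrite /a /anorm sqr_sqrtr -qv ?qf_hess_Phi_ge0.
have a_ge0 : 0 <= a := sqrtr_ge0 _.
have csa_lt1 : c * (s * a) < 1.
  have ca_ge0 : 0 <= c * a := mulr_ge0 c_ge0 a_ge0.
  rewrite mulrCA mulrA /s -mulrA ltr_pdivrMl ?mulr1; lra.
rewrite !qf_mx qfZ -qf_mx -a2; apply: (@le_lt_trans _ _ (c ^+ 2 * (s ^+ 2 * a ^+ 2))).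
  by apply: ler_wpM2r => //; rewrite mulr_ge0 ?sqr_ge0.
have csa_ge0 : 0 <= c * (s * a) by rewrite !mulr_ge0 // invr_ge0 addr_ge0 ?mulr_ge0.
by rewrite -!exprMn; nra.
Qed.

End PhiBounds.
End PhiDerivatives.

Section DonsInvariant.
Variables (R : realType) (n : nat) (eta beta T : R) (r : nat -> 'rV[R]_n.+2).
Hypotheses (eta_gt0 : 0 < eta) (T_gt1 : 1 < T) (beta_gt0 : 0 < beta).
Local Notation vbar := (@vbar R n.+2).
Local Notation dT := ((n.+2)%:R * T).

Lemma vbar_played (y : 'rV[R]_n.+1) i : Cpos y ->
  dT^-1 <= vbar ((1 - T^-1) *: y + dT^-1 *: const_mx 1) 0 i.
Proof.
move=> ypos; have T_gt0 : 0 < T := lt_trans ltr01 T_gt1.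
have -> : dT^-1 *: const_mx 1 = (1 - (1 - T^-1)) *: const_mx (n.+2)%:R^-1 :> 'rV_n.+1.
  by apply/rowP => j; rewrite !mxE subKr mulr1 invfM mulrC.
rewrite vbar_aff aff_conv -!vbar_aff vbar_center subKr invfM [X in X <= _]mulrC ler_wpDl //.
by rewrite mulr_ge0 ?subr_ge0 ?invf_le1 ?ltW // ypos.
Qed.

Lemma dons_invariant k : let '(w, rho, g) := dons eta beta T r k in
  (forall i, rho k 0 i <= dT) /\ Cpos (w k.+1).
Proof.
have dT_gt0 : 0 < dT by rewrite mulr_gt0 ?ltr0Sn ?(lt_trans ltr01).
have dT_inv_gt0 : 0 < dT^-1 by rewrite invr_gt0.
elim: k => [|k] /=.
  by split=> [i|]; [rewrite mxE ler_peMr ?ltW // ltr0Sn | exact: Cpos_center].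
case: (dons _ _ _ _ k) => [[w rho] g] [rho_le w_pos]; rewrite !eqxx.
set rho' := \row_i _; have rho'_le i : rho' 0 i <= dT.
  rewrite mxE; case: ifP => _ //; have played := vbar_played i w_pos.
  have ub_gt0 : 0 < vbar _ 0 i := lt_le_trans dT_inv_gt0 played.
  by rewrite -[X in _ <= X]invrK lef_pV2 ?posrE.
have e_le i : eta_i eta T rho' i <= eta * expR 1 by exact: eta_i_le.
split=> //; apply: (Cpos_newton _ _ _ eta_gt0 beta_gt0 e_le) => //.
rewrite sqr_sqrtr; first by rewrite mulrC.
by rewrite mulr_ge0 ?expR_ge0 // ltW.
Qed.

End DonsInvariant.

Theorem lemma5 (R : realType) (d : nat) (eta beta T : R)
  (r : nat -> 'rV[R]_d) :
  (2 <= d)%N -> 1 < T -> 0 < eta -> 0 < beta ->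
  (forall t, (1 <= t)%N -> (forall i, 0 <= r t 0 i <= 1) /\ r t != 0) ->
  forall t, (1 <= t)%N ->
    exists M : R, M <= Num.sqrt (eta * expR 1) /\
      self_concordant (@Cset R d) (dons_Phi eta beta T r t) M.
Proof.
(* The returns enter only through the g_s, on which nothing is assumed. *)
case: d r => [|[|n]] r // _ T_gt1 eta_gt0 beta_gt0 _ t _.
exists (Num.sqrt (eta * expR 1)); split => //; rewrite /dons_Phi.
have := dons_invariant r eta_gt0 T_gt1 beta_gt0 t.
case: (dons _ _ _ _ t) => [[w rho] g] [rho_le _].
by apply: Phi_self_concordant => // i; exact: eta_i_le.
Qed.
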